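(* Let $\lambda\ge\omega_3$ be a cardinal, $F:[\lambda]^2\to\omega_1$ any function, and $\mathcal P=\langle P,\le\rangle$ the forcing poset defined in the context. Then: (a) If $p=\langle X,\preceq,i\rangle\in P$ and $t\in T\setminus X$, then there is $p'=\langle X',\preceq',i'\rangle\in P$ with $p'\le p$ and $t\in X'$. (b) If $p=\langle X,\preceq,i\rangle\in P$, $t\in X$, $\alpha<\min\{\pi(t),\omega_1\}$ and $n<\omega$, then there are $p'=\langle X',\preceq',i'\rangle\in P$ with $p'\le p$ and $s\in X'\setminus X$ with $\pi(s)=\alpha$ and $\rho(s)>n$ such that for every $x\in X$: $s\preceq' x$ iff $t\preceq x$.
   Context: For $s=\langle\alpha,\zeta\rangle$ write $\pi(s)=\alpha$, $\rho(s)=\zeta$. Let $T=(\omega_1\times\omega)\cup(\{\omega_1,\omega_1+1\}\times\lambda)$, with $T_\alpha=\{\alpha\}\times\omega$ for $\alpha<\omega_1$, $T_{\omega_1}=\{\omega_1\}\times\lambda$, $T_{\omega_1+1}=\{\omega_1+1\}\times\lambda$, and $t_\xi=\langle\omega_1+1,\xi\rangle$ for $\xi<\lambda$. Let $\mathbb B=\{S\}\cup\lambda$ (where $S$ is a new symbol), $\mathbb B_S=\omega_1\times\omega$ and $\mathbb B_\zeta=\{\omega_1\}\times[\omega\cdot\zeta,\omega\cdot\zeta+\omega)\cup\{t_\zeta\}$ for $\zeta<\lambda$; these partition $T$, and $\pi_B:T\to\mathbb B$ is defined by $x\in\mathbb B_{\pi_B(x)}$. $P$ consists of all triples $p=\langle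 X,\preceq,i\rangle$ such that: (P1) $X\in[T]^{<\omega}$; (P2) $\preceq$ is a partial order on $X$ such that $x\prec y$ implies $\pi(x)<\pi(y)$; (P3) if $X\cap\mathbb B_\zeta\ne\emptyset$ for some $\zeta<\lambda$, then $t_\zeta\in X$; (P4) if $x\in X\cap T_{\omega_1}\cap\mathbb B_\zeta$ for $\zeta<\lambda$, then $x\prec t_\zeta$ and $x\not\prec t_\xi$ for all $\xi\ne\zeta$ (with $t_\xi\in X$); (P5) if $s\neq t$ lie in the same $\mathbb B_b$ ($b\in\mathbb B$) with $\pi(s)=\pi(t)$, then $i\{s,t\}=\emptyset$; (P6) if $t\in X\cap T_{\alpha+1}$ for some $\alpha\le\omega_1$ and $s\prec t$, then there is $v\in X\cap T_\alpha$ with $s\preceq v\prec t$; (P7) $i:[X]^2\to[X]^{<\omega}$ satisfies $i\{x,y\}=\{x\}$ whenever $x\prec y$, and whenever $x,y\in X$ are $\preceq$-incomparable: (a) for all $u\in X$, ($u\preceq x$ and $u\preceq y$) iff $u\preceq v$ for some $v\in i\{x,y\}$; (b) if $x,y\in T_{\omega_1}\cup T_{\omega_1+1}$ and $\pi_B(x)\ne\pi_B(y)$, then $\pi[i\{x,y\}]\subseteq F\{\pi_B(x),\pi_B(y)\}$ (the ordinal $F\{\cdot,\cdot\}<\omega_1$ viewed as the set of smaller ordinals). Order: $\langle X',\preceq',i'\rangle\le\langle X,\preceq,i\rangle$ iff $X\subseteq X'$, $\preceq=\preceq'\cap(X\times X)$, and $i\subseteq i'$. *)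

(* Ordinals omega_1 and the cardinal lambda are modelled by types. *)
From Stdlib Require Import List.

Definition injective {A B : Type} (f : A -> B) : Prop :=
  forall x y, f x = f y -> x = y.

Definition strict_well_order {A : Type} (R : A -> A -> Prop) : Prop :=
  (forall x, ~ R x x) /\
  (forall x y z, R x y -> R y z -> R x z) /\
  (forall x y, R x y \/ x = y \/ R y x) /\
  well_founded R.

(* card_le_aleph n A  <->  |A| <= aleph_n  (under AC):
   |A| <= aleph_0 iff A injects into nat;
   |A| <= aleph_(n+1) iff A has a well-order all of whose proper
   initial segments have size <= aleph_n. *)
Fixpoint card_le_aleph (n : nat) (A : Type) : Prop :=
  match n with
  | 0 => exists f : A -> nat, injective f
  | S m => exists R : A -> A -> Prop,
             strict_well_order R /\ forall a, card_le_aleph m {b : A | R b a}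
  end.

Definition is_omega1 {O : Type} (lt : O -> O -> Prop) : Prop :=
  strict_well_order lt /\ ~ card_le_aleph 0 O /\
  (forall a, card_le_aleph 0 {b : O | lt b a}).

Section Forcing.
Variables (O : Type) (ltO : O -> O -> Prop) (L : Type).

(* Points of T:
   TLow a n  = <a, n>              (a < omega_1, n < omega)
   TMid z n  = <omega_1, omega*z+n> (z < lambda, n < omega)
   TTop z    = t_z = <omega_1+1, z> (z < lambda) *)
Inductive T : Type :=
| TLow (a : O) (n : nat)
| TMid (z : L) (n : nat)
| TTop (z : L).

(* levels: ordinals <= omega_1 + 1 *)
Inductive Lev : Type := LO (a : O) | LW1 | LW1p.

Definition pi (x : T) : Lev :=
  match x with TLow a _ => LO a | TMid _ _ => LW1 | TTop _ => LW1p end.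

Definition lev_lt (u v : Lev) : Prop :=
  match u, v with
  | LO a, LO b => ltO a b
  | LO _, LW1 => True
  | LO _, LW1p => True
  | LW1, LW1p => True
  | _, _ => False
  end.

Definition lev_succ (u v : Lev) : Prop :=
  match u, v with
  | LO a, LO b => ltO a b /\ forall c, ~ (ltO a c /\ ltO c b)
  | LW1, LW1p => True
  | _, _ => False
  end.

Inductive Bidx : Type := BS | Bz (z : L).

Definition piB (x : T) : Bidx :=
  match x with TLow _ _ => BS | TMid z _ => Bz z | TTop z => Bz z end.

Definition is_high (x : T) : Prop := pi x = LW1 \/ pi x = LW1p.

Definition finite_set (S : T -> Prop) : Prop :=
  exists l : list T, forall x, S x <-> In x l.

(* a triple <X, <=, i>; sets are predicates, i maps a pair to a set *)
Record cond : Type := mkCond {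
  cX : T -> Prop;
  cle : T -> T -> Prop;
  ci : T -> T -> T -> Prop }.

Definition cprec (p : cond) (x y : T) : Prop := cle p x y /\ x <> y.

Definition InP (F : L -> L -> O) (p : cond) : Prop :=
  finite_set (cX p) /\
  (forall x y, cle p x y -> cX p x /\ cX p y) /\
  (forall x, cX p x -> cle p x x) /\
  (forall x y, cle p x y -> cle p y x -> x = y) /\
  (forall x y z, cle p x y -> cle p y z -> cle p x z) /\
  (forall x y, cprec p x y -> lev_lt (pi x) (pi y)) /\
  (forall x z, cX p x -> piB x = Bz z -> cX p (TTop z)) /\
  (forall z n, cX p (TMid z n) ->
     cprec p (TMid z n) (TTop z) /\
     (forall xi, xi <> z -> cX p (TTop xi) -> ~ cprec p (TMid z n) (TTop xi))) /\
  (forall s t, cX p s -> cX p t -> s <> t -> piB s = piB t -> pi s = pi t ->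
     forall v, ~ ci p s t v) /\
  (forall s t u, cX p t -> lev_succ u (pi t) -> cprec p s t ->
     exists v, cX p v /\ pi v = u /\ cle p s v /\ cprec p v t) /\
  (* P7: i : [X]^2 -> [X]^{<omega} (symmetric in the unordered pair) *)
  (forall x y, cX p x -> cX p y -> x <> y ->
     finite_set (ci p x y) /\ (forall v, ci p x y v -> cX p v) /\
     (forall v, ci p x y v <-> ci p y x v)) /\
  (forall x y, cprec p x y -> forall v, ci p x y v <-> v = x) /\
  (forall x y, cX p x -> cX p y -> ~ cle p x y -> ~ cle p y x ->
     (forall u, cX p u ->
        (cle p u x /\ cle p u y <-> exists v, ci p x y v /\ cle p u v)) /\
     (forall z z', is_high x -> is_high y -> piB x = Bz z -> piB y = Bz z' ->
        z <> z' -> forall v, ci p x y v -> lev_lt (pi v) (LO (F z z')))).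

Definition ext (p' p : cond) : Prop :=
  (forall x, cX p x -> cX p' x) /\
  (forall x y, cX p x -> cX p y -> (cle p x y <-> cle p' x y)) /\
  (forall x y, cX p x -> cX p y -> x <> y ->
     forall v, ci p x y v <-> ci p' x y v).

End Forcing.

Arguments TLow {O L}. Arguments TMid {O L}. Arguments TTop {O L}.
Arguments LO {O}. Arguments LW1 {O}. Arguments LW1p {O}.
Arguments InP {O} ltO {L} F p.
Arguments lev_lt {O} ltO u v.
Arguments pi {O L} x.
Arguments cX {O L} c _.
Arguments cle {O L} c _ _.
Arguments ext {O L} p' p.

(* Both statements are proved by adjoining new points one at a time. A point [s] is
   added below an up-closed set [U] of old points, with [i{s,y} = {s}] for [y] in [U];
   this is again a condition as soon as [U] respects (P3)-(P7), e.g. when [U] is empty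
   or is the upper set of an old point [t] whose level is the successor of that of [s].
   For (a) the new point is isolated, except that a point of [T_omega1 /\ B_zeta] is
   put directly below [t_zeta] (adjoining [t_zeta] first if needed). For (b) one walks
   down from [t] by well-founded induction on levels: while the level of the current
   point has an immediate predecessor other than [alpha], a fresh point is adjoined
   there directly below it; otherwise [<alpha, m>] with [m] fresh and large is adjoined
   directly below it. Each new point lies below exactly the points above its parent, so
   the last one lies below exactly the points of [p] above [t]. *)

From Stdlib Require Import List Classical Lia.

Section Density.
Variables (O : Type) (ltO : O -> O -> Prop).
Hypothesis ltO_irrefl : forall a, ~ ltO a a.
Hypothesis ltO_trans : forall a b c, ltO a b -> ltO b c -> ltO a c.
Hypothesis ltO_total : forall a b, ltO a b \/ a = b \/ ltO b a.
Hypothesis ltO_wf : well_founded ltO.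

Lemma lev_lt_irrefl (u : Lev O) : ~ lev_lt ltO u u.
Proof. destruct u; simpl; auto. Qed.

Lemma lev_lt_trans (u v w : Lev O) :
  lev_lt ltO u v -> lev_lt ltO v w -> lev_lt ltO u w.
Proof. destruct u, v, w; simpl; intros; try tauto; eauto. Qed.

Lemma lev_lt_wf : well_founded (lev_lt ltO).
Proof.
  assert (Acc_LO : forall a, Acc (lev_lt ltO) (LO a)).
  { intro a; induction (ltO_wf a) as [a _ IH].
    constructor; intros [b| |] H; simpl in H; try tauto; auto. }
  assert (Acc_W1 : Acc (lev_lt ltO) LW1).
  { constructor; intros [b| |] H; simpl in H; try tauto; auto. }
  intros [a| |]; auto.
  constructor; intros [b| |] H; simpl in H; try tauto; auto.
Qed.

Lemma lev_succ_lt (u w : Lev O) : lev_succ O ltO u w -> lev_lt ltO u w.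
Proof. destruct u, w; simpl; tauto. Qed.

Lemma lev_succ_lt_pred (u v w : Lev O) :
  lev_succ O ltO u w -> lev_lt ltO v w -> v = u \/ lev_lt ltO v u.
Proof.
  destruct u as [b| |], w as [c| |]; simpl; try tauto.
  - intros [Hbc Hgap] Hv; destruct v as [a| |]; simpl in Hv; try tauto.
    destruct (ltO_total a b) as [Hab|[->|Hba]]; auto.
    exfalso; apply (Hgap a); auto.
  - intros _ Hv; destruct v as [a| |]; simpl in Hv; try tauto; auto.
Qed.

Lemma lev_succ_inj (u1 u2 w : Lev O) :
  lev_succ O ltO u1 w -> lev_succ O ltO u2 w -> u1 = u2.
Proof.
  destruct u1 as [b1| |], u2 as [b2| |], w as [c| |]; simpl; try tauto.
  intros [H1 Hgap1] [H2 Hgap2].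
  destruct (ltO_total b1 b2) as [H|[->|H]]; auto; exfalso.
  - apply (Hgap1 b2); auto.
  - apply (Hgap2 b1); auto.
Qed.

Section Conditions.
Variables (L : Type) (F : L -> L -> O).

Lemma finite_set_ext (S S' : T O L -> Prop) :
  (forall x, S x <-> S' x) -> finite_set O L S' -> finite_set O L S.
Proof. intros HS [l Hl]; exists l; intro x; rewrite HS; apply Hl. Qed.

Lemma finite_set_guarded_singleton (P : Prop) (s : T O L) :
  finite_set O L (fun v => P /\ v = s).
Proof.
  destruct (classic P) as [HP|HP].
  - exists (s :: nil); simpl; intuition congruence.
  - exists nil; simpl; tauto.
Qed.

Lemma ext_trans (p3 p2 p1 : cond O L) : ext p3 p2 -> ext p2 p1 -> ext p3 p1.
Proof.
  intros [A1 [B1 C1]] [A2 [B2 C2]]; split; [|split]; auto.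
  - intros x y Hx Hy; rewrite B2 by auto; apply B1; auto.
  - intros x y Hx Hy Hne v; rewrite C2 by auto; apply C1; auto.
Qed.

Section Projections.
Context {p : cond O L} (Hp : InP ltO F p).

Lemma InP_finite : finite_set O L (cX p).
Proof. destruct Hp as (H & _); eauto. Qed.

Lemma InP_le_dom x y : cle p x y -> cX p x /\ cX p y.
Proof. destruct Hp as (_ & H & _); eauto. Qed.

Lemma InP_le_refl x : cX p x -> cle p x x.
Proof. destruct Hp as (_ & _ & H & _); eauto. Qed.

Lemma InP_le_antisym x y : cle p x y -> cle p y x -> x = y.
Proof. destruct Hp as (_ & _ & _ & H & _); eauto. Qed.

Lemma InP_le_trans x y z : cle p x y -> cle p y z -> cle p x z.
Proof. destruct Hp as (_ & _ & _ & _ & H & _); eauto. Qed.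

Lemma InP_prec_lev x y : cprec O L p x y -> lev_lt ltO (pi x) (pi y).
Proof. destruct Hp as (_ & _ & _ & _ & _ & H & _); eauto. Qed.

Lemma InP_top x z : cX p x -> piB O L x = Bz L z -> cX p (TTop z).
Proof. destruct Hp as (_ & _ & _ & _ & _ & _ & H & _); eauto. Qed.

Lemma InP_mid z n : cX p (TMid z n) ->
  cprec O L p (TMid z n) (TTop z) /\
  (forall xi, xi <> z -> cX p (TTop xi) -> ~ cprec O L p (TMid z n) (TTop xi)).
Proof. destruct Hp as (_ & _ & _ & _ & _ & _ & _ & H & _); eauto. Qed.

Lemma InP_i_block x y : cX p x -> cX p y -> x <> y ->
  piB O L x = piB O L y -> pi x = pi y -> forall v, ~ ci O L p x y v.
Proof. destruct Hp as (_ & _ & _ & _ & _ & _ & _ & _ & H & _); eauto. Qed.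

Lemma InP_interp x t u : cX p t -> lev_succ O ltO u (pi t) -> cprec O L p x t ->
  exists v, cX p v /\ pi v = u /\ cle p x v /\ cprec O L p v t.
Proof. destruct Hp as (_ & _ & _ & _ & _ & _ & _ & _ & _ & H & _); eauto. Qed.

Lemma InP_i_dom x y : cX p x -> cX p y -> x <> y ->
  finite_set O L (ci O L p x y) /\ (forall v, ci O L p x y v -> cX p v) /\
  (forall v, ci O L p x y v <-> ci O L p y x v).
Proof. destruct Hp as (_ & _ & _ & _ & _ & _ & _ & _ & _ & _ & H & _); eauto. Qed.

Lemma InP_i_prec x y : cprec O L p x y -> forall v, ci O L p x y v <-> v = x.
Proof. destruct Hp as (_ & _ & _ & _ & _ & _ & _ & _ & _ & _ & _ & H & _); eauto. Qed.

Lemma InP_i_meet x y : cX p x -> cX p y -> ~ cle p x y -> ~ cle p y x ->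
  (forall u, cX p u -> (cle p u x /\ cle p u y <-> exists v, ci O L p x y v /\ cle p u v)) /\
  (forall z z', is_high O L x -> is_high O L y -> piB O L x = Bz L z -> piB O L y = Bz L z' ->
     z <> z' -> forall v, ci O L p x y v -> lev_lt ltO (pi v) (LO (F z z'))).
Proof. destruct Hp as (_ & _ & _ & _ & _ & _ & _ & _ & _ & _ & _ & _ & H); eauto. Qed.

End Projections.

Definition adjoin (p : cond O L) (s : T O L) (U : T O L -> Prop) : cond O L :=
  mkCond O L (fun x => x = s \/ cX p x)
    (fun x y => cle p x y \/ (x = s /\ (y = s \/ U y)))
    (fun x y v => (x <> s /\ y <> s /\ ci O L p x y v) \/
                  (x = s /\ y <> s /\ U y /\ v = s) \/
                  (y = s /\ x <> s /\ U x /\ v = s)).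

Section Adjoin.
Variables (p : cond O L) (s : T O L) (U : T O L -> Prop).
Hypothesis Hp : InP ltO F p.
Hypothesis s_new : ~ cX p s.

Local Notation q := (adjoin p s U).

Lemma adjoin_ext : ext q p.
Proof.
  split; [|split]; simpl; auto.
  - intros x y Hx Hy; split; auto.
    intros [H|[-> _]]; [auto|contradiction].
  - intros x y Hx Hy Hne v.
    assert (x <> s) by congruence; assert (y <> s) by congruence; tauto.
Qed.

Lemma old_ne_new x : cX p x -> x <> s.
Proof. congruence. Qed.

Lemma not_le_new_l y : ~ cle p s y.
Proof. intros H; apply s_new, (InP_le_dom Hp _ _ H). Qed.

Lemma not_le_new_r x : ~ cle p x s.
Proof. intros H; apply s_new, (InP_le_dom Hp _ _ H). Qed.

Lemma adjoin_le_old x y : x <> s -> (cle q x y <-> cle p x y).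
Proof. simpl; tauto. Qed.

Lemma adjoin_le_new y : y <> s -> (cle q s y <-> U y).
Proof. simpl; pose proof (not_le_new_l y); intuition. Qed.

Lemma adjoin_le_to_new x : cle q x s -> x = s.
Proof. simpl; pose proof (not_le_new_r x); tauto. Qed.

Lemma adjoin_i_old x y v : x <> s -> y <> s -> (ci O L q x y v <-> ci O L p x y v).
Proof. simpl; tauto. Qed.

Lemma adjoin_i_new_l y v : y <> s -> (ci O L q s y v <-> U y /\ v = s).
Proof. simpl; intuition. Qed.

Lemma adjoin_i_new_r y v : y <> s -> (ci O L q y s v <-> U y /\ v = s).
Proof. simpl; intuition. Qed.

Hypothesis U_old : forall x, U x -> cX p x.
Hypothesis U_up : forall x y, U x -> cle p x y -> U y.
Hypothesis U_above : forall x, U x -> lev_lt ltO (pi s) (pi x).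
Hypothesis s_top : forall z, piB O L s = Bz L z -> s = TTop z \/ cX p (TTop z).
Hypothesis s_mid : forall z n, s = TMid z n ->
  U (TTop z) /\ forall xi, xi <> z -> ~ U (TTop xi).
Hypothesis U_interp : forall x u, U x -> lev_succ O ltO u (pi x) ->
  u = pi s \/ exists v, U v /\ pi v = u /\ cprec O L p v x.
Hypothesis U_meet : forall x y, U x -> U y -> ~ cle p x y -> ~ cle p y x ->
  exists v, ci O L p x y v /\ U v.

Lemma adjoin_finite : finite_set O L (cX q).
Proof.
  destruct (InP_finite Hp) as [l Hl]; exists (s :: l); intros x; simpl.
  rewrite <- Hl; split; intros [H|H]; auto.
Qed.

Lemma adjoin_le_dom x y : cle q x y -> cX q x /\ cX q y.
Proof.
  simpl; intros [H|[-> [->|HU]]]; auto.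
  destruct (InP_le_dom Hp _ _ H); auto.
Qed.

Lemma adjoin_le_refl x : cX q x -> cle q x x.
Proof. simpl; intros [->|H]; auto using InP_le_refl. Qed.

Lemma adjoin_le_antisym x y : cle q x y -> cle q y x -> x = y.
Proof.
  simpl; intros [H1|[-> H1]] [H2|[-> H2]];
    solve [eauto using InP_le_antisym | destruct (not_le_new_r _ H1)
          | destruct (not_le_new_r _ H2)].
Qed.

Lemma adjoin_le_trans x y z : cle q x y -> cle q y z -> cle q x z.
Proof.
  simpl; intros [H1|[-> H1]] [H2|[-> H2]]; eauto using InP_le_trans.
  - destruct (not_le_new_r _ H1).
  - destruct H1 as [->|HU]; [destruct (not_le_new_l _ H2)|eauto].
Qed.

Lemma adjoin_prec_lev x y : cprec O L q x y -> lev_lt ltO (pi x) (pi y).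
Proof.
  unfold cprec; simpl; intros [[H|[-> [->|HU]]] Hne]; auto.
  - apply (InP_prec_lev Hp); split; auto.
  - contradiction.
Qed.

Lemma adjoin_top x z : cX q x -> piB O L x = Bz L z -> cX q (TTop z).
Proof.
  simpl; intros [->|Hx] Hz.
  - destruct (s_top z Hz); auto.
  - right; eapply (InP_top Hp); eauto.
Qed.

Lemma adjoin_mid z n : cX q (TMid z n) ->
  cprec O L q (TMid z n) (TTop z) /\
  (forall xi, xi <> z -> cX q (TTop xi) -> ~ cprec O L q (TMid z n) (TTop xi)).
Proof.
  unfold cprec; intros [Hs|Hx].
  - destruct (s_mid z n (eq_sym Hs)) as [Hz Hxi]; rewrite Hs.
    assert (Htop : forall xi, TTop xi <> s) by congruence.
    split; [split; [apply adjoin_le_new|]; auto; congruence|].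
    intros xi Hne _ [H _]; apply (Hxi xi Hne), (adjoin_le_new (TTop xi)); auto.
  - destruct (InP_mid Hp z n Hx) as [[Hz Hne] Hxi].
    assert (Hold : forall y, cle q (TMid z n) y <-> cle p (TMid z n) y)
      by (intro; apply adjoin_le_old, old_ne_new; auto).
    split; [rewrite Hold; split; auto|].
    intros xi Hne' Htop [H Hne2]; rewrite Hold in H.
    destruct Htop as [Htop|Htop]; [rewrite Htop in H; apply (not_le_new_r _ H)|].
    apply (Hxi xi); auto; split; auto.
Qed.

Lemma adjoin_i_block x y : cX q x -> cX q y -> x <> y ->
  piB O L x = piB O L y -> pi x = pi y -> forall v, ~ ci O L q x y v.
Proof.
  intros Hx Hy Hne Hb Hpi v.
  destruct (classic (x = s)) as [->|Hxs]; [|destruct (classic (y = s)) as [->|Hys]].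
  - rewrite adjoin_i_new_l by auto; intros [HU _].
    apply (lev_lt_irrefl (pi s)); rewrite Hpi at 2; auto.
  - rewrite adjoin_i_new_r by auto; intros [HU _].
    apply (lev_lt_irrefl (pi s)); rewrite <- Hpi at 2; auto.
  - rewrite adjoin_i_old by auto.
    destruct Hx as [|Hx]; [contradiction|]; destruct Hy as [|Hy]; [contradiction|].
    apply (InP_i_block Hp); auto.
Qed.

Lemma adjoin_interp x t u : cX q t -> lev_succ O ltO u (pi t) -> cprec O L q x t ->
  exists v, cX q v /\ pi v = u /\ cle q x v /\ cprec O L q v t.
Proof.
  unfold cprec; simpl; intros Ht Hsucc [[H|[-> [->|HU]]] Hne].
  - destruct (InP_le_dom Hp _ _ H) as [_ Ht'].
    destruct (InP_interp Hp x t u Ht' Hsucc (conj H Hne)) as (v & Hv & Hpv & Hxv & Hvt & Hne').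
    exists v; auto 6.
  - contradiction.
  - destruct (U_interp t u HU Hsucc) as [->|(v & HUv & Hpv & Hvt & Hne')].
    + exists s; intuition.
    + exists v; intuition.
Qed.

Lemma adjoin_i_dom x y : cX q x -> cX q y -> x <> y ->
  finite_set O L (ci O L q x y) /\ (forall v, ci O L q x y v -> cX q v) /\
  (forall v, ci O L q x y v <-> ci O L q y x v).
Proof.
  intros Hx Hy Hne.
  destruct (classic (x = s)) as [->|Hxs]; [|destruct (classic (y = s)) as [->|Hys]].
  - split; [|split].
    + apply (finite_set_ext _ (fun v => U y /\ v = s)); auto using finite_set_guarded_singleton.
      intro; apply adjoin_i_new_l; congruence.
    + intros v Hv; apply adjoin_i_new_l in Hv as [_ ->]; simpl; auto; congruence.
    + intro v; rewrite adjoin_i_new_l, adjoin_i_new_r by congruence; tauto.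
  - split; [|split].
    + apply (finite_set_ext _ (fun v => U x /\ v = s)); auto using finite_set_guarded_singleton.
      intro; apply adjoin_i_new_r; congruence.
    + intros v Hv; apply adjoin_i_new_r in Hv as [_ ->]; simpl; auto; congruence.
    + intro v; rewrite adjoin_i_new_l, adjoin_i_new_r by congruence; tauto.
  - destruct Hx as [|Hx]; [contradiction|]; destruct Hy as [|Hy]; [contradiction|].
    destruct (InP_i_dom Hp x y Hx Hy Hne) as (Hfin & Hdom & Hsym).
    split; [|split].
    + apply (finite_set_ext _ (ci O L p x y)); auto.
      intro; apply adjoin_i_old; auto.
    + intros v Hv; apply adjoin_i_old in Hv; simpl; auto.
    + intro v; rewrite !adjoin_i_old; auto.
Qed.

Lemma adjoin_i_prec x y : cprec O L q x y -> forall v, ci O L q x y v <-> v = x.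
Proof.
  intros [Hle Hne] v; simpl in Hle; destruct Hle as [H|[-> [->|HU]]].
  - destruct (InP_le_dom Hp _ _ H) as [Hx Hy].
    rewrite adjoin_i_old by (apply old_ne_new; auto).
    apply (InP_i_prec Hp); split; auto.
  - contradiction.
  - rewrite adjoin_i_new_l by auto; tauto.
Qed.

Lemma adjoin_i_incomparable_new y v : ~ cle q s y -> ~ ci O L q s y v /\ ~ ci O L q y s v.
Proof.
  intros Nsy; assert (Hys : y <> s) by (intros ->; apply Nsy; simpl; auto).
  rewrite adjoin_i_new_l, adjoin_i_new_r, <- (adjoin_le_new y) by auto; tauto.
Qed.

Lemma adjoin_i_meet_old x y : cX p x -> cX p y -> ~ cle p x y -> ~ cle p y x ->
  (forall u, cX q u -> (cle q u x /\ cle q u y <-> exists v, ci O L q x y v /\ cle q u v)) /\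
  (forall z z', is_high O L x -> is_high O L y -> piB O L x = Bz L z -> piB O L y = Bz L z' ->
     z <> z' -> forall v, ci O L q x y v -> lev_lt ltO (pi v) (LO (F z z'))).
Proof.
  intros Hx Hy Nxy Nyx.
  assert (Hne : x <> y) by (intros ->; apply Nxy, (InP_le_refl Hp), Hy).
  destruct (InP_i_dom Hp x y Hx Hy Hne) as (_ & Hdom & _).
  destruct (InP_i_meet Hp x y Hx Hy Nxy Nyx) as [Hmeet HF].
  assert (Hi : forall v, ci O L q x y v <-> ci O L p x y v)
    by (intro; apply adjoin_i_old; apply old_ne_new; auto).
  setoid_rewrite Hi; split; [|eauto].
  intros u [->|Hu].
  - rewrite !adjoin_le_new by (apply old_ne_new; auto); split.
    + intros [Ux Uy]; destruct (U_meet x y Ux Uy Nxy Nyx) as [v [Hv Uv]].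
      exists v; rewrite adjoin_le_new by (apply old_ne_new; auto); auto.
    + intros [v [Hv Hsv]]; rewrite adjoin_le_new in Hsv by (apply old_ne_new; auto).
      destruct (proj2 (Hmeet v (Hdom v Hv))) as [Hvx Hvy];
        [exists v; split; auto using InP_le_refl|].
      split; eapply U_up; eauto.
  - assert (Hu' : forall w, cle q u w <-> cle p u w) by (intro; apply adjoin_le_old, old_ne_new; auto).
    setoid_rewrite Hu'; auto.
Qed.

Lemma adjoin_i_meet x y : cX q x -> cX q y -> ~ cle q x y -> ~ cle q y x ->
  (forall u, cX q u -> (cle q u x /\ cle q u y <-> exists v, ci O L q x y v /\ cle q u v)) /\
  (forall z z', is_high O L x -> is_high O L y -> piB O L x = Bz L z -> piB O L y = Bz L z' ->
     z <> z' -> forall v, ci O L q x y v -> lev_lt ltO (pi v) (LO (F z z'))).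
Proof.
  intros Hx Hy Nxy Nyx.
  destruct (classic (x = s)) as [->|Hxs]; [|destruct (classic (y = s)) as [->|Hys]].
  - assert (Hi : forall v, ~ ci O L q s y v) by (intro; apply adjoin_i_incomparable_new; auto).
    split; [|intros; exfalso; eapply Hi; eauto].
    intros u _; split; [intros [Hus Huy]; apply adjoin_le_to_new in Hus as ->; contradiction|].
    intros [v [Hv _]]; destruct (Hi v Hv).
  - assert (Hi : forall v, ~ ci O L q x s v) by (intro; apply adjoin_i_incomparable_new; auto).
    split; [|intros; exfalso; eapply Hi; eauto].
    intros u _; split; [intros [Hux Hus]; apply adjoin_le_to_new in Hus as ->; contradiction|].
    intros [v [Hv _]]; destruct (Hi v Hv).
  - destruct Hx as [|Hx]; [contradiction|]; destruct Hy as [|Hy]; [contradiction|].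
    apply adjoin_i_meet_old; auto; intro H; [apply Nxy|apply Nyx]; apply adjoin_le_old; auto.
Qed.

Lemma adjoin_InP : InP ltO F q.
Proof.
  exact (conj adjoin_finite (conj adjoin_le_dom (conj adjoin_le_refl (conj adjoin_le_antisym
    (conj adjoin_le_trans (conj adjoin_prec_lev (conj adjoin_top (conj adjoin_mid
    (conj adjoin_i_block (conj adjoin_interp (conj adjoin_i_dom
    (conj adjoin_i_prec adjoin_i_meet)))))))))))).
Qed.

End Adjoin.

Lemma adjoin_below_InP p t s : InP ltO F p -> cX p t -> ~ cX p s ->
  lev_lt ltO (pi s) (pi t) ->
  (forall u, lev_succ O ltO u (pi t) -> u = pi s) ->
  (forall z, piB O L s = Bz L z -> cX p (TTop z)) ->
  (forall z n, s = TMid z n -> t = TTop z) ->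
  InP ltO F (adjoin p s (cle p t)).
Proof.
  intros Hp Ht Hs Hlev Hpred Htop Hmid.
  assert (Hup : forall x, cle p t x -> t = x \/ cprec O L p t x)
    by (intros x H; destruct (classic (t = x)); [left|right; split]; auto).
  apply adjoin_InP; auto.
  - intros x H; apply (InP_le_dom Hp _ _ H).
  - intros x y; apply (InP_le_trans Hp).
  - intros x H; destruct (Hup x H) as [<-|Htx]; auto.
    eapply lev_lt_trans; eauto using InP_prec_lev.
  - intros z n E; rewrite (Hmid z n E) in Ht |- *; split; auto using InP_le_refl.
    intros xi Hxi H; apply (lev_lt_irrefl (@LW1p O)).
    apply (InP_prec_lev Hp (TTop z) (TTop xi)); split; congruence.
  - intros x u H Hsucc; destruct (Hup x H) as [<-|Htx]; auto.
    destruct (InP_interp Hp t x u (proj2 (InP_le_dom Hp _ _ H)) Hsucc Htx)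
      as (v & _ & Hpv & Htv & Hvx); eauto.
  - intros x y Hx Hy Nxy Nyx.
    pose proof (proj2 (InP_le_dom Hp _ _ Hx)); pose proof (proj2 (InP_le_dom Hp _ _ Hy)).
    destruct (InP_i_meet Hp x y) as [Hmeet _]; auto.
    destruct (proj1 (Hmeet t Ht) (conj Hx Hy)) as (v & Hv & Htv); eauto.
Qed.

Lemma adjoin_isolated_InP p s : InP ltO F p -> ~ cX p s -> (forall z n, s <> TMid z n) ->
  InP ltO F (adjoin p s (fun _ => False)).
Proof.
  intros Hp Hs Hmid; apply adjoin_InP; try tauto.
  - destruct s as [a k|z k|z]; simpl; intros z' E; try discriminate.
    + destruct (Hmid z k eq_refl).
    + left; congruence.
  - intros z n E; destruct (Hmid z n E).
Qed.

Lemma adjoin_mid_below_top_InP p z k : InP ltO F p -> cX p (TTop z) -> ~ cX p (TMid z k) ->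
  InP ltO F (adjoin p (TMid z k) (cle p (TTop z))).
Proof.
  intros Hp Hz Hs; apply adjoin_below_InP; simpl; auto; try congruence.
  destruct u; simpl; tauto.
Qed.

Lemma exists_ext_containing p t : InP ltO F p -> ~ cX p t ->
  exists p', InP ltO F p' /\ ext p' p /\ cX p' t.
Proof.
  intros Hp Ht.
  assert (Hiso : (forall z n, t <> TMid z n) -> exists p', InP ltO F p' /\ ext p' p /\ cX p' t)
    by (intro Hmid; exists (adjoin p t (fun _ => False));
        split; [apply adjoin_isolated_InP|split; [apply adjoin_ext|simpl]]; auto).
  destruct t as [a k|z k|z]; try (apply Hiso; discriminate).
  destruct (classic (cX p (TTop z))) as [Hz|Hz].
  - exists (adjoin p (TMid z k) (cle p (TTop z))).
    split; [apply adjoin_mid_below_top_InP|split; [apply adjoin_ext|simpl]]; auto.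
  - set (p1 := adjoin p (TTop z) (fun _ => False)).
    assert (Hp1 : InP ltO F p1) by (apply adjoin_isolated_InP; auto; discriminate).
    assert (Hk1 : ~ cX p1 (TMid z k)) by (simpl; intros [E|H]; [discriminate|contradiction]).
    exists (adjoin p1 (TMid z k) (cle p1 (TTop z))).
    split; [apply adjoin_mid_below_top_InP; simpl; auto|split; [|simpl; auto]].
    apply (ext_trans _ p1); apply adjoin_ext; auto.
Qed.

Definition nat_coord (x : T O L) : nat :=
  match x with TLow _ k | TMid _ k => k | TTop _ => 0 end.

Lemma exists_fresh_coord p n : InP ltO F p ->
  exists k, n < k /\ (forall a, ~ cX p (TLow a k)) /\ (forall z, ~ cX p (TMid z k)).
Proof.
  intros Hp; destruct (InP_finite Hp) as [l Hl].
  set (M := fold_right (fun x acc => nat_coord x + acc) 0 l).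
  assert (HM : forall x, In x l -> nat_coord x <= M).
  { unfold M; clear M Hl; induction l as [|y l IH]; simpl; [tauto|].
    intros x [->|H]; [lia|specialize (IH x H); lia]. }
  exists (S (n + M)); split; [lia|split]; intros c H; apply Hl, HM in H; simpl in H; lia.
Qed.

Lemma exists_fresh_at_pred p t u : InP ltO F p -> cX p t -> lev_succ O ltO u (pi t) ->
  exists s, pi s = u /\ ~ cX p s /\ (forall z, piB O L s = Bz L z -> cX p (TTop z)) /\
    (forall z n, s = TMid z n -> t = TTop z).
Proof.
  intros Hp Ht Hsucc; destruct (exists_fresh_coord p 0 Hp) as (k & _ & Hlow & Hmid).
  destruct u as [b| |].
  - exists (TLow b k); repeat split; auto; discriminate.
  - destruct t as [a0 k0|z k0|z]; simpl in Hsucc; try tauto.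
    exists (TMid z k); repeat split; auto; simpl; congruence.
  - destruct (pi t); simpl in Hsucc; tauto.
Qed.

Definition copy_below (p p' : cond O L) (t : T O L) (a : O) (n m : nat) : Prop :=
  InP ltO F p' /\ ext p' p /\ n < m /\ cX p' (TLow a m) /\ ~ cX p (TLow a m) /\
  (forall x, cX p x -> (cle p' (TLow a m) x <-> cle p t x)).

Lemma copy_below_adjoin p t s p' a n m : InP ltO F p -> ~ cX p s ->
  copy_below (adjoin p s (cle p t)) p' s a n m -> copy_below p p' t a n m.
Proof.
  intros Hp Hs (Hp' & Hext & Hnm & Hm & Hnew & Hle).
  split; [|split; [|split; [|split; [|split]]]]; auto.
  - apply (ext_trans _ (adjoin p s (cle p t))); auto using adjoin_ext.
  - intro H; apply Hnew; simpl; auto.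
  - intros x Hx; rewrite Hle by (simpl; auto).
    apply adjoin_le_new; auto; apply (old_ne_new p); auto.
Qed.

Lemma exists_copy_below p t a n : InP ltO F p -> cX p t -> lev_lt ltO (LO a) (pi t) ->
  exists p' m, copy_below p p' t a n m.
Proof.
  intros Hp Ht Ha; remember (pi t) as w eqn:Hw; revert p t Hp Ht Ha Hw.
  induction w as [w IH] using (well_founded_induction lev_lt_wf); intros p t Hp Ht Ha ->.
  destruct (classic (exists u, lev_succ O ltO u (pi t) /\ u <> LO a)) as [[u [Hu Hua]]|Hno].
  - assert (Hau : lev_lt ltO (LO a) u)
      by (destruct (lev_succ_lt_pred _ _ _ Hu Ha); congruence).
    destruct (exists_fresh_at_pred p t u Hp Ht Hu) as (s & <- & Hs & Htop & Hmid).
    assert (Hq : InP ltO F (adjoin p s (cle p t)))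
      by (apply adjoin_below_InP; eauto using lev_succ_lt, lev_succ_inj).
    destruct (IH (pi s) (lev_succ_lt _ _ Hu) _ s Hq (or_introl eq_refl) Hau eq_refl)
      as (p' & m & Hcopy).
    exists p', m; eapply copy_below_adjoin; eauto.
  - destruct (exists_fresh_coord p n Hp) as (k & Hnk & Hk & _).
    assert (Hq : InP ltO F (adjoin p (TLow a k) (cle p t))).
    { apply adjoin_below_InP; auto; try discriminate.
      intros u Hu; apply NNPP; intro Hne; eauto. }
    exists (adjoin p (TLow a k) (cle p t)), k.
    split; [|split; [|split; [|split; [|split]]]]; simpl; auto using adjoin_ext.
    intros x Hx; apply adjoin_le_new; auto; apply (old_ne_new p); auto.
Qed.

End Conditions.
End Density.

Theorem lemma3p8 (O : Type) (ltO : O -> O -> Prop) (L : Type)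
  (F : L -> L -> O)
  (HO : is_omega1 ltO)
  (HL : ~ card_le_aleph 2 L)
  (HF : forall z z', F z z' = F z' z) :
  (forall p : cond O L, InP ltO F p ->
     forall t : T O L, ~ cX p t ->
       exists p' : cond O L, InP ltO F p' /\ ext p' p /\ cX p' t) /\
  (forall (p : cond O L) (t : T O L) (a : O) (n : nat),
     InP ltO F p -> cX p t -> lev_lt ltO (LO a) (pi t) ->
     exists (p' : cond O L) (m : nat),
       InP ltO F p' /\ ext p' p /\ n < m /\
       cX p' (TLow a m) /\ ~ cX p (TLow a m) /\
       (forall x, cX p x -> (cle p' (TLow a m) x <-> cle p t x))).
Proof.
  destruct HO as [[irrefl [trans [total wf]]] _]; split.
  - intros p Hp t Ht; apply exists_ext_containing; auto.
  - intros p t a n Hp Ht Ha; apply exists_copy_below; auto.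
Qed.
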